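(* Let $(G,\mathcal{B}_1,\mathcal{B}_2)$ be a Rota-Baxter system of groups with cocycle $\Phi$. Then $\Phi(G)=G_{1_G}$, and every element $a\in\Phi(G)$ can be written uniquely as $a=a_1a_2$ with $(a_1,a_2)\in G_\Theta$.
   Context: A Rota-Baxter system of groups is a triple $(G,\mathcal{B}_1,\mathcal{B}_2)$ where $G$ is a group with identity $1_G$ and $\mathcal{B}_1,\mathcal{B}_2:G\to G$ are maps such that for all $a,b\in G$: $\mathcal{B}_1(a)\mathcal{B}_1(b)=\mathcal{B}_1(\mathcal{B}_1(a)b\mathcal{B}_2(a))$ and $\mathcal{B}_2(b)\mathcal{B}_2(a)=\mathcal{B}_2(\mathcal{B}_1(a)b\mathcal{B}_2(a))$. Descendent operation: $a\circ b=\mathcal{B}_1(a)b\mathcal{B}_2(a)$; cocycle: $\Phi(a)=\mathcal{B}_1(a)\mathcal{B}_2(a)$; $e_a=\mathcal{B}_1(a)^{-1}a\mathcal{B}_2(a)^{-1}$; $G_{1_G}=\{a\in G\mid a\circ e_{1_G}=a\}$. Let $\operatorname{Ker}(\mathcal{B}_i)=\{a\in G\mid \mathcal{B}_i(a)=1_G\}$, $G_1=\mathcal{B}_1(G)$, $G_2=\mathcal{B}_2(G)$ (these are subgroups of $G$), $H_1=\mathcal{B}_1(\operatorname{Ker}(\mathcal{B}_2))$, $H_2=\mathcal{B}_2(\operatorname{Ker}(\mathcal{B}_1))$ (these are normal subgroups of $G_1$, $G_2$ respectively). The map $\Theta:G_1/H_1\to G_2/H_2$, $\Theta(\mathcal{B}_1(a)H_1)=\mathcal{B}_2(a)H_2$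 ($a\in G$), is well defined. Set $G_\Theta=\{(a_1,a_2)\in G_1\times G_2\mid \Theta(a_1H_1)=a_2H_2\}$. *)

Record Group := {
  carrier :> Type;
  gmul : carrier -> carrier -> carrier;
  gone : carrier;
  ginv : carrier -> carrier;
  gmulA : forall x y z, gmul x (gmul y z) = gmul (gmul x y) z;
  gmul1l : forall x, gmul gone x = x;
  gmul1r : forall x, gmul x gone = x;
  gmulVl : forall x, gmul (ginv x) x = gone;
  gmulVr : forall x, gmul x (ginv x) = gone
}.

Arguments gmul {g}.
Arguments gone {g}.
Arguments ginv {g}.

Section RBS.
Variable G : Group.

Local Notation "x * y" := (gmul x y).
Local Notation "x ^-1" := (ginv x) (at level 3, format "x ^-1").
Local Notation "1" := (@gone G).

Definition is_RB_system (B1 B2 : G -> G) : Prop :=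
  (forall a b : G, B1 a * B1 b = B1 (B1 a * b * B2 a)) /\
  (forall a b : G, B2 b * B2 a = B2 (B1 a * b * B2 a)).

Variables B1 B2 : G -> G.

Definition desc_op (a b : G) : G := B1 a * b * B2 a.

Definition cocycle (a : G) : G := B1 a * B2 a.

Definition e_elt (a : G) : G := (B1 a)^-1 * a * (B2 a)^-1.

Definition G_one (a : G) : Prop := desc_op a (e_elt 1) = a.

Definition in_Phi_image (a : G) : Prop := exists b : G, cocycle b = a.

Definition Ker (B : G -> G) (a : G) : Prop := B a = 1.

Definition G1 (x : G) : Prop := exists a : G, B1 a = x.
Definition G2 (x : G) : Prop := exists a : G, B2 a = x.

Definition H1 (x : G) : Prop := exists a : G, Ker B2 a /\ B1 a = x.
Definition H2 (x : G) : Prop := exists a : G, Ker B1 a /\ B2 a = x.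

Definition lcoset (H : G -> Prop) (x : G) (y : G) : Prop :=
  exists h : G, H h /\ y = x * h.
Definition same_lcoset (H : G -> Prop) (x y : G) : Prop :=
  forall z : G, lcoset H x z <-> lcoset H y z.

(* G_Theta = {(a1,a2) in G1 x G2 | Theta(a1 H1) = a2 H2}, where
   Theta(B1(a) H1) = B2(a) H2; unfolded: a1 H1 = B1(a) H1 for some a,
   and then a2 H2 = B2(a) H2 (well-definedness of Theta). *)
Definition G_Theta (p : G * G) : Prop :=
  G1 (fst p) /\ G2 (snd p) /\
  exists a : G, same_lcoset H1 (fst p) (B1 a) /\ same_lcoset H2 (snd p) (B2 a).

End RBS.

(* The descendent operation [a ∘ b = B1 a * b * B2 a] is associative, and the
   axioms say that B1 and B2 turn it into a product and an anti-product:
   B1 (a ∘ b) = B1 a * B1 b and B2 (a ∘ b) = B2 b * B2 a.  Hence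
   Φ(a ∘ b) = a ∘ Φ(b) and Φ(a) = a ∘ 1.  The element e := e_1 satisfies
   1 ∘ e = 1, and some v has Φ(v) = e; so Φ(b) ∘ e = b ∘ (1 ∘ e) = Φ(b), and
   conversely a ∘ e = a gives a = Φ(a ∘ v).  For the decomposition, every pair
   of G_Θ has the form (B1 d, B2 d), and Φ(d) = Φ(d') forces B1 d = B1 d' and
   B2 d = B2 d', because writing d = d' ∘ t gives Φ(t) = 1, whence B1 t = 1
   (as B1 (Φ t) = B1 t * B1 1) and then B2 t = 1. *)


Section GroupFacts.
Variable G : Group.
Local Notation "x * y" := (gmul x y).
Local Notation "x ^-1" := (ginv x) (at level 3, format "x ^-1").

Lemma mulVKr (x y : G) : x * y^-1 * y = x.
Proof. rewrite <- gmulA, gmulVl, gmul1r; reflexivity. Qed.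

Lemma mulKr (x y : G) : x * y * y^-1 = x.
Proof. rewrite <- gmulA, gmulVr, gmul1r; reflexivity. Qed.

Lemma mulI (x y z : G) : x * y = x * z -> y = z.
Proof.
  intro E.
  rewrite <- (gmul1l _ y), <- (gmul1l _ z), <- (gmulVl _ x), <- !gmulA, E.
  reflexivity.
Qed.

Lemma mulIr (x y z : G) : y * x = z * x -> y = z.
Proof. intro E. rewrite <- (mulKr y x), <- (mulKr z x), E. reflexivity. Qed.

End GroupFacts.

Global Hint Rewrite gmulA gmulVl gmulVr gmul1l gmul1r mulVKr mulKr : grp.

Section RotaBaxterSystem.
Variable G : Group.
Variables B1 B2 : G -> G.
Hypothesis RB : is_RB_system G B1 B2.

Local Notation "x * y" := (gmul x y).
Local Notation "x ^-1" := (ginv x) (at level 3, format "x ^-1").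
Local Notation "1" := (@gone G).
Local Notation "a ∘ b" := (desc_op G B1 B2 a b) (at level 40, left associativity).
Local Notation Φ := (cocycle G B1 B2).
Local Notation e := (e_elt G B1 B2 1).

Lemma B1_desc_op (a b : G) : B1 (a ∘ b) = B1 a * B1 b.
Proof. symmetry; apply (proj1 RB). Qed.

Lemma B2_desc_op (a b : G) : B2 (a ∘ b) = B2 b * B2 a.
Proof. symmetry; apply (proj2 RB). Qed.

Lemma desc_opA (a b c : G) : a ∘ b ∘ c = a ∘ (b ∘ c).
Proof.
  unfold desc_op at 1 3. rewrite B1_desc_op, B2_desc_op.
  unfold desc_op. autorewrite with grp. reflexivity.
Qed.

Lemma desc_opI (a b c : G) : a ∘ b = a ∘ c -> b = c.
Proof. unfold desc_op. intro E. exact (mulI _ _ _ _ (mulIr _ _ _ _ E)). Qed.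

Lemma desc_op_div (a b : G) : a ∘ ((B1 a)^-1 * b * (B2 a)^-1) = b.
Proof. unfold desc_op. autorewrite with grp. reflexivity. Qed.

Lemma cocycleE (a : G) : Φ a = a ∘ 1.
Proof. unfold cocycle, desc_op. rewrite gmul1r. reflexivity. Qed.

Lemma cocycle_desc_op (a b : G) : Φ (a ∘ b) = a ∘ Φ b.
Proof. rewrite !cocycleE. apply desc_opA. Qed.

Lemma B1_cocycle (a : G) : B1 (Φ a) = B1 a * B1 1.
Proof. rewrite cocycleE, B1_desc_op. reflexivity. Qed.

Lemma desc_one_e : 1 ∘ e = 1.
Proof. unfold desc_op, e_elt. autorewrite with grp. reflexivity. Qed.

Lemma B_of_desc_one (u w : G) :
  1 ∘ u = w -> B1 u = (B1 1)^-1 * B1 w /\ B2 u = B2 w * (B2 1)^-1.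
Proof.
  intros <-. rewrite B1_desc_op, B2_desc_op. autorewrite with grp.
  split; reflexivity.
Qed.

Lemma B1_e : B1 e = 1.
Proof. rewrite (proj1 (B_of_desc_one _ _ desc_one_e)), gmulVl. reflexivity. Qed.

Lemma B2_e : B2 e = 1.
Proof. rewrite (proj2 (B_of_desc_one _ _ desc_one_e)), gmulVr. reflexivity. Qed.

Lemma cocycle_onto_e : exists v : G, Φ v = e.
Proof.
  set (v := (B1 1)^-1 * e * (B2 1)^-1).
  destruct (B_of_desc_one v e) as [Bv1 Bv2]; [apply desc_op_div|].
  exists v. unfold cocycle. rewrite Bv1, Bv2, B1_e, B2_e.
  unfold e_elt. autorewrite with grp. reflexivity.
Qed.

Lemma G_one_cocycle (b : G) : G_one G B1 B2 (Φ b).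
Proof.
  unfold G_one. rewrite cocycleE, desc_opA, desc_one_e. reflexivity.
Qed.

Lemma cocycle_of_G_one (a : G) : G_one G B1 B2 a -> exists b, Φ b = a.
Proof.
  unfold G_one. intro Ha. destruct cocycle_onto_e as [v Hv].
  exists (a ∘ v). rewrite cocycle_desc_op, Hv. exact Ha.
Qed.

Lemma cocycle_eq1 (t : G) : Φ t = 1 -> B1 t = 1 /\ B2 t = 1.
Proof.
  intro Ht.
  assert (Bt1 : B1 t = 1).
  { apply (mulIr _ (B1 1)). rewrite <- B1_cocycle, Ht, gmul1l. reflexivity. }
  split; [exact Bt1|].
  unfold cocycle in Ht. rewrite Bt1, gmul1l in Ht. exact Ht.
Qed.

Lemma cocycle_inj_B (d d' : G) :
  Φ d = Φ d' -> B1 d = B1 d' /\ B2 d = B2 d'.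
Proof.
  intro E.
  set (t := (B1 d')^-1 * d * (B2 d')^-1).
  assert (Dt : d' ∘ t = d) by apply desc_op_div.
  rewrite <- Dt, cocycle_desc_op, (cocycleE d') in E.
  destruct (cocycle_eq1 t (desc_opI _ _ _ E)) as [Bt1 Bt2].
  rewrite <- Dt, B1_desc_op, B2_desc_op, Bt1, Bt2, gmul1l, gmul1r.
  split; reflexivity.
Qed.

Lemma H1_one : H1 G B1 B2 1.
Proof. exists e. split; [exact B2_e | exact B1_e]. Qed.

Lemma H2_one : H2 G B1 B2 1.
Proof. exists e. split; [exact B1_e | exact B2_e]. Qed.

Lemma mem_same_lcoset (H : G -> Prop) (x z : G) :
  H 1 -> same_lcoset G H x z -> lcoset G H z x.
Proof.
  intros H_1 Exz. apply Exz. exists 1. rewrite gmul1r. split; [exact H_1 | reflexivity].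
Qed.

Lemma G_Theta_B (p : G * G) :
  G_Theta G B1 B2 p -> exists d, p = (B1 d, B2 d).
Proof.
  destruct p as [a1 a2]. intros [_ [_ [c [Hc1 Hc2]]]]. simpl in *.
  destruct (mem_same_lcoset _ _ _ H1_one Hc1) as [h1 [[k [Bk2 <-]] ->]].
  destruct (mem_same_lcoset _ _ _ H2_one Hc2) as [h2 [[m [Bm1 <-]] ->]].
  unfold Ker in Bk2, Bm1.
  exists (m ∘ (c ∘ k)).
  rewrite B1_desc_op, B2_desc_op, B1_desc_op, B2_desc_op, Bk2, Bm1, gmul1l, gmul1l.
  reflexivity.
Qed.

Lemma G_Theta_cocycle (b : G) : G_Theta G B1 B2 (B1 b, B2 b).
Proof.
  split; [exists b; reflexivity|]. split; [exists b; reflexivity|].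
  exists b. split; intro z; apply iff_refl.
Qed.

End RotaBaxterSystem.

Theorem theorem5p7 (G : Group) (B1 B2 : G -> G) :
  is_RB_system G B1 B2 ->
  (forall a : G, in_Phi_image G B1 B2 a <-> G_one G B1 B2 a) /\
  (forall a : G, in_Phi_image G B1 B2 a ->
     exists! p : G * G, G_Theta G B1 B2 p /\ a = gmul (fst p) (snd p)).
Proof.
  intro RB. split.
  - intro a. split.
    + intros [b <-]. apply G_one_cocycle; exact RB.
    + apply cocycle_of_G_one; exact RB.
  - intros a [b <-]. exists (B1 b, B2 b). split.
    + split; [apply G_Theta_cocycle | reflexivity].
    + intros p [Hp Ep]. destruct (G_Theta_B _ _ _ RB p Hp) as [d ->].
      destruct (cocycle_inj_B _ _ _ RB b d Ep) as [-> ->]. reflexivity.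
Qed.
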